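(* Let $n\in\mathbb{N}$ and let $n=2^{\alpha_1}-2^{\alpha_2}+\cdots+(-1)^{\ell-1}2^{\alpha_\ell}$ be an alternating binary representation of $n$. Then $c(n)=\ell$ if $n$ is odd (i.e. $\alpha_\ell=0$), and $c(n)=\ell+1$ if $n$ is even (i.e. $\alpha_\ell\ge1$). Consequently $h(n)=\ell-1$ if $n$ is odd and $h(n)=\ell$ if $n$ is even.
   Context: An alternating binary representation (ABR) of $n\in\mathbb{N}$ is an expression $n=\sum_{i=1}^{\ell}(-1)^{i-1}2^{\alpha_i}$ with $\ell\ge1$ and nonnegative integers $\alpha_1>\alpha_2>\cdots>\alpha_{\ell-1}>\alpha_\ell+1$ (every $n$ has one, obtained from its binary expansion by rewriting maximal blocks of 1s as differences of powers of two, except a final isolated 1). For $i\in\mathbb{N}$, $m\in\mathbb{N}_0$ let $d_i(m)=2^{i-1}-|(m\bmod 2^i)-2^{i-1}|$, and let $c(n)$ be the number of distinct values in $\{d_i(n):i\in\mathbb{N}\}$. For $k\ge0$, $0\le m<2^k$ let $\beta_k(m)\in\{0,1\}^k$ have $j$-th coordinate equal to the binary digit of $m$ of weight $2^{k-j}$. For $n\ge2$, $k=\lceil\log_2 n\rceil$, a pair $(n_0,n_1)$ with $n=n_0+n_1$, $n_0\ge n_1\ge1$ is a hypercubic bipartition (HCBP) of $n$ if for some $i\in\{1,\dots,k\}$ the hyperplane $x_i=1/2$ splits $\beta_k(0),\dots,\beta_k(n-1)$ into $n_0$ points on one side and $n_1$ on the other. For $n\ge 2$, $h(n)$ is the number of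 HCBPs of $n$, and $h(1)=0$. *)

From HB Require Import structures.
From mathcomp Require Import all_boot all_order all_algebra.
From mathcomp Require Import boolp classical_sets cardinality finmap.
Set Implicit Arguments. Unset Strict Implicit. Unset Printing Implicit Defensive.
Import Order.TTheory GRing.Theory Num.Theory.
Local Open Scope ring_scope.

(* Alternating binary representation: a = [:: alpha_1; ...; alpha_l] with
   l >= 1, alpha_1 > ... > alpha_{l-1} > alpha_l + 1, and
   n = sum_{i=1}^l (-1)^(i-1) 2^(alpha_i). (Indices are 0-based below.) *)
Definition is_ABR (n : nat) (a : seq nat) : Prop :=
  [/\ (0 < size a)%N,
      sorted (fun x y : nat => (y < x)%N) a,
      (1 < size a)%N -> (nth 0 a (size a).-1 + 1 < nth 0 a (size a).-2)%N
    & (n%:Z = \sum_(i < size a) (-1) ^+ i * (2 ^ (nth 0 a i))%N%:Z)].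

Definition dval (i m : nat) : int :=
  (2 ^ i.-1)%N%:Z - `| (m %% 2 ^ i)%N%:Z - (2 ^ i.-1)%N%:Z |%:Z.

Definition cnum (n : nat) : nat :=
  #|` fset_set [set dval i n | i in [set i : nat | (0 < i)%N]] |%fset.

(* beta_k(m)_j is the binary digit of m of weight 2^(k-j); number of
   m in {0,...,n-1} with that digit equal to 1 (the side x_j > 1/2). *)
Definition ones_at (k j n : nat) : nat :=
  #|[set m : 'I_n | odd (m %/ 2 ^ (k - j))]|.

Definition is_HCBP (n n0 n1 : nat) : bool :=
  let k := up_log 2 n in
  [&& n0 + n1 == n, n1 <= n0, 0 < n1 &
   [exists j : 'I_k.+1, (0 < (j : nat)) &&
      (((ones_at k j n == n1) && (n - ones_at k j n == n0)) ||
       ((ones_at k j n == n0) && (n - ones_at k j n == n1)))]]%N.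

(* h(n): number of HCBPs of n for n >= 2, h(1) = 0 (h(0) is not used). *)
Definition hnum (n : nat) : nat :=
  if (n < 2)%N then 0%N
  else #|[set p : 'I_n.+1 * 'I_n.+1 | is_HCBP n p.1 p.2]|.

From mathcomp Require Import all_boot all_order all_algebra.
From mathcomp Require Import classical_sets cardinality finmap.
From mathcomp Require Import zify.
Set Implicit Arguments. Unset Strict Implicit. Unset Printing Implicit Defensive.
Import GRing.Theory.

(* Peel the ABR from the left: n = 2^a1 - n', where n' has the ABR (a2, ..., al)
   and 2 n' < 2^a1.  Reflection m |-> 2^a1 - m preserves d_i for i <= a1, and for
   i > a1 both d_i(n) = n and d_i(n') = n' = d_a1(n'); hence the value set of n is
   that of n' plus the new value n, which exceeds all the others.  The base case
   2^a has values {0, 2^a} (or {1} when a = 0).  For h(n), the digit of weight 2^b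
   is 1 for exactly (n - d_(b+1)(n))/2 of the numbers below n, so hypercubic
   bipartitions correspond to the values d_i(n) < n, i.e. to all values but n. *)

Definition dist_pow2 (i m : nat) : nat := minn (m %% 2 ^ i) (2 ^ i - m %% 2 ^ i).

Lemma dvalE i m : 0 < i -> dval i m = dist_pow2 i m.
Proof.
case: i => [//|i] _; rewrite /dval /dist_pow2 /=.
have : m %% 2 ^ i.+1 < 2 ^ i.+1 by rewrite ltn_pmod // expn_gt0.
move: (m %% _) => r; rewrite expnS; move: (2 ^ i) => h; lia.
Qed.

Lemma dist_pow2_le i m : dist_pow2 i m <= m.
Proof. exact: leq_trans (geq_minl _ _) (leq_mod _ _). Qed.

Lemma dist_pow2_small i m : 2 * m <= 2 ^ i -> dist_pow2 i m = m.
Proof.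
move=> le_2m; have : 0 < 2 ^ i by rewrite expn_gt0.
rewrite /dist_pow2 modn_small; lia.
Qed.

Lemma dist_pow2_exp i a : i <= a -> dist_pow2 i (2 ^ a) = 0.
Proof. by move=> le_ia; rewrite /dist_pow2 -(subnK le_ia) expnD modnMl min0n. Qed.

Lemma dist_pow2_subr i a m : i <= a -> m <= 2 ^ a ->
  dist_pow2 i (2 ^ a - m) = dist_pow2 i m.
Proof.
move=> le_ia le_m; have pos : 0 < 2 ^ i by rewrite expn_gt0.
have lt_r : m %% 2 ^ i < 2 ^ i by rewrite ltn_pmod.
rewrite /dist_pow2 modnB // -(subnK le_ia) expnD modnMl.
by case: ltnP; move: (m %% _) lt_r => r; lia.
Qed.

Lemma dist_pow2S b n :
  dist_pow2 b.+1 n.+1 + 2 * odd (n %/ 2 ^ b) = dist_pow2 b.+1 n + 1.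
Proof.
have pos : 0 < 2 ^ b by rewrite expn_gt0.
have lt_r : n %% 2 ^ b.+1 < 2 ^ b.+1 by rewrite ltn_pmod // expn_gt0.
rewrite /dist_pow2 (divn_eq n (2 ^ b.+1)).
move: (n %/ _) (n %% _) lt_r => q r lt_r.
have -> : (q * 2 ^ b.+1 + r) %/ 2 ^ b = q * 2 + r %/ 2 ^ b.
  by rewrite expnS mulnA divnMDl.
rewrite -addnS !modnMDl (modn_small lt_r) oddD oddM andbF /=.
rewrite expnS in lt_r *.
have [lt_rb|le_br] := ltnP r (2 ^ b).
  rewrite divn_small // modn_small; lia.
have -> : r %/ 2 ^ b = 1.
  rewrite (_ : r = 1 * 2 ^ b + (r - 2 ^ b)); last lia.
  rewrite divnMDl // divn_small; lia.
have [e|ne] := eqVneq r.+1 (2 * 2 ^ b); first by rewrite e modnn; lia.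
rewrite modn_small; lia.
Qed.

Lemma card_odd_digit b n :
  2 * #|[set m : 'I_n | odd (m %/ 2 ^ b)]| + dist_pow2 b.+1 n = n.
Proof.
rewrite cardsE -sum1_card big_mkcond /=.
elim: n => [|n IH]; first by rewrite big_ord0 /dist_pow2 mod0n subn0 min0n.
rewrite big_ord_recr /= unfold_in /=; have := dist_pow2S b n; move: IH.
by case: odd; move: (\sum_(_ < n) _) => S; lia.
Qed.

Lemma odd_dist_pow2 i n : 0 < i -> odd (dist_pow2 i n) = odd n.
Proof.
case: i => [//|b] _; rewrite -[in RHS](card_odd_digit b n).
by rewrite oddD oddM.
Qed.

Definition enum_dists (n : nat) (s : seq nat) : Prop :=
  uniq s /\ forall x, x \in s <-> exists2 i, 0 < i & x = dist_pow2 i n.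

Lemma enum_dists_exp2 a :
  exists s, enum_dists (2 ^ a) s /\ size s = (if odd (2 ^ a) then 1 else 2).
Proof.
have [->|a_gt0] := posnP a.
  exists [:: 1]; split => //; split => // x; rewrite inE; split.
    by move/eqP ->; exists 1 => //; rewrite dist_pow2_small.
  by case=> i i_gt0 ->; rewrite dist_pow2_small // muln1 -(expn1 2) leq_pexp2l.
exists [:: 0; 2 ^ a]; rewrite oddX eqn0Ngt a_gt0; split => //; split.
  by rewrite /= inE eq_sym -lt0n expn_gt0.
move=> x; rewrite !inE; split.
  case/orP => /eqP ->; first by exists 1; rewrite ?dist_pow2_exp.
  by exists a.+1; rewrite ?dist_pow2_small // expnS.
case=> i i_gt0 ->; have [le_ia|lt_ai] := leqP i a; first by rewrite dist_pow2_exp.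
by rewrite dist_pow2_small ?eqxx ?orbT // -expnS leq_pexp2l.
Qed.

Lemma enum_dists_subr a m s : 0 < m -> 2 * m < 2 ^ a -> enum_dists m s ->
  enum_dists (2 ^ a - m) ((2 ^ a - m) :: s).
Proof.
move=> m_gt0 lt_2m [uniq_s mem_s].
have le_m : m <= 2 ^ a by lia.
have a_gt0 : 0 < a by rewrite lt0n; apply: contraTneq lt_2m => ->; lia.
have dist_big i : a < i -> dist_pow2 i (2 ^ a - m) = 2 ^ a - m.
  move=> lt_ai; apply/dist_pow2_small/(leq_trans _ (leq_pexp2l _ lt_ai)) => //.
  by rewrite expnS leq_mul2l leq_subr orbT.
split.
  rewrite /= uniq_s andbT; apply/negP => /mem_s [i _ e].
  by have := dist_pow2_le i m; rewrite -e; lia.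
move=> x; rewrite inE; split.
  case/orP => [/eqP ->|/mem_s [i i_gt0 ->]]; first by exists a.+1; rewrite ?dist_big.
  have [le_ia|lt_ai] := leqP i a; first by exists i; rewrite ?dist_pow2_subr.
  have le_2m_i : 2 * m <= 2 ^ i.
    by apply: leq_trans (ltnW lt_2m) _; rewrite leq_pexp2l // ltnW.
  exists a => //; rewrite dist_pow2_subr // !dist_pow2_small //; exact: ltnW.
case=> i i_gt0 ->; have [le_ia|lt_ai] := leqP i a; last by rewrite dist_big ?eqxx.
by apply/orP; right; apply/mem_s; exists i; rewrite ?dist_pow2_subr.
Qed.

Local Open Scope ring_scope.
Definition alt_sum (a : seq nat) : int :=
  \sum_(i < size a) (-1) ^+ i * (2 ^ (nth 0 a i))%N%:Z.

Lemma alt_sum_cons x a : alt_sum (x :: a) = (2 ^ x)%N%:Z - alt_sum a.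
Proof.
rewrite /alt_sum /= big_ord_recl /= expr0 mul1r -sumrN.
by congr (_ + _); apply: eq_bigr => i _; rewrite exprS mulN1r mulNr.
Qed.
Local Close Scope ring_scope.

Lemma double_lt_exp2 m b c (single : bool) :
  m + ~~ single <= 2 ^ b -> b + single < c -> 2 * m < 2 ^ c.
Proof.
move=> le_m lt_bc; have le_exp : 2 ^ (b + single).+1 <= 2 ^ c by rewrite leq_exp2l.
have := expn_gt0 2 b; case: single le_m le_exp {lt_bc} => /=.
  by rewrite addn1 !expnS; lia.
by rewrite addn0 expnS; lia.
Qed.

Lemma abr_enum_dists a :
  0 < size a -> sorted (fun x y => y < x) a ->
  (1 < size a -> nth 0 a (size a).-1 + 1 < nth 0 a (size a).-2) ->
  exists n s, [/\ Posz n = alt_sum a, 0 < n, n + (1 < size a) <= 2 ^ head 0 a,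
    enum_dists n s & size s = (if odd n then size a else (size a).+1)].
Proof.
elim: a => [//|c [|b a] IH] _ /=.
  move=> _ _; have [s [enum_s size_s]] := enum_dists_exp2 c.
  exists (2 ^ c), s; rewrite alt_sum_cons /alt_sum big_ord0 subr0 expn_gt0 addn0.
  by rewrite size_s; case: odd.
case/andP=> lt_bc sorted_ba gap.
have [m [s [sum_m m_gt0 le_m enum_s size_s]]] : exists m s,
    [/\ Posz m = alt_sum (b :: a), 0 < m, m + (1 < size (b :: a)) <= 2 ^ b,
      enum_dists m s & size s = (if odd m then size (b :: a) else (size (b :: a)).+1)].
  by apply: IH => //; case: a gap {sorted_ba} => // d a gap _; apply: gap.
have lt_2m : 2 * m < 2 ^ c.
  apply: (double_lt_exp2 (b := b) (single := a == [::])).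
    by move: le_m; rewrite /= ltnS lt0n size_eq0.
  by case: (a) gap => [|d a'] /= gap; rewrite ?gap ?addn0.
have c_gt0 : 0 < c by apply: leq_ltn_trans lt_bc.
exists (2 ^ c - m), ((2 ^ c - m) :: s); split.
- by rewrite alt_sum_cons -sum_m subzn //; lia.
- lia.
- lia.
- exact: enum_dists_subr.
- by rewrite oddB ?oddX ?eqn0Ngt ?c_gt0 /= ?size_s; [case: odd | lia].
Qed.

Lemma is_HCBP_dist n p q : is_HCBP n p q ->
  exists2 i, 0 < i & [/\ dist_pow2 i n < n, p = (n + dist_pow2 i n) %/ 2
                       & q = (n - dist_pow2 i n) %/ 2].
Proof.
case/and4P=> /eqP sum_pq le_qp q_gt0 /existsP [j /andP [_ split_j]].
have := card_odd_digit (up_log 2 n - j) n; rewrite -/(ones_at _ j n).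
move: (ones_at _ j n) split_j => o split_j ones_o.
exists (up_log 2 n - j).+1 => //.
by case/orP: split_j => /andP [/eqP o_eq /eqP no_eq]; split; lia.
Qed.

Lemma dist_is_HCBP n i : 0 < i -> dist_pow2 i n < n ->
  is_HCBP n ((n + dist_pow2 i n) %/ 2) ((n - dist_pow2 i n) %/ 2).
Proof.
move=> i_gt0 lt_dn; set k := up_log 2 n.
have le_ik : i <= k.
  rewrite leqNgt; apply: contraTN lt_dn => lt_ki; rewrite dist_pow2_small ?ltnn //.
  by apply: leq_trans (leq_pexp2l _ lt_ki) => //; rewrite expnS leq_mul2l up_logP.
have lt_jk : k - i.-1 < k.+1 by lia.
have par : dist_pow2 i n %% 2 = n %% 2 by rewrite !modn2 odd_dist_pow2.
have := card_odd_digit i.-1 n; rewrite prednK //.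
rewrite (_ : i.-1 = k - Ordinal lt_jk) /=; last lia.
rewrite -/(ones_at k (Ordinal lt_jk) n) => ones_o.
apply/and4P; split; [apply/eqP; lia | lia | lia |].
apply/existsP; exists (Ordinal lt_jk); apply/andP; split; first by rewrite /=; lia.
by rewrite -/k; apply/orP; left; apply/andP; split; apply/eqP; lia.
Qed.

Lemma card_HCBP n s : enum_dists n s ->
  #|[set p : 'I_n.+1 * 'I_n.+1 | is_HCBP n p.1 p.2]| = count (fun x => x < n) s.
Proof.
move=> [uniq_s mem_s].
pose split_of x : 'I_n.+1 * 'I_n.+1 := (inord ((n + x) %/ 2), inord ((n - x) %/ 2)).
have -> : [set p : 'I_n.+1 * 'I_n.+1 | is_HCBP n p.1 p.2] =
          [set p in map split_of (filter (fun x => x < n) s)].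
  apply/setP => -[p q]; rewrite !inE; apply/idP/mapP => [/is_HCBP_dist|] /=.
    case=> i i_gt0 [lt_dn p_eq q_eq]; exists (dist_pow2 i n).
      by rewrite mem_filter lt_dn; apply/mem_s; exists i.
    by congr (_, _); apply/val_inj; rewrite /= inordK; lia.
  case=> x; rewrite mem_filter /split_of => /andP [lt_xn /mem_s [i i_gt0 x_eq]] [-> ->].
  by subst x; rewrite /= !inordK ?dist_is_HCBP //; lia.
rewrite cardsE (card_uniqP _) ?size_map ?size_filter //.
rewrite map_inj_in_uniq ?filter_uniq // => x y.
rewrite !mem_filter => /andP [lt_xn /mem_s [i i_gt0 x_eq]] /andP [lt_yn /mem_s [j j_gt0 y_eq]].
subst x y => -[_ /(congr1 val)]; rewrite /= !inordK; try lia.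
have : dist_pow2 i n %% 2 = dist_pow2 j n %% 2 by rewrite !modn2 !odd_dist_pow2.
lia.
Qed.

Lemma hnum_enum n s : enum_dists n s -> hnum n = count (fun x => x < n) s.
Proof.
move=> enum_s; rewrite /hnum -(card_HCBP enum_s); case: ltnP => // lt_n2.
apply/esym/eqP; rewrite cards_eq0; apply/eqP/setP => -[p q]; rewrite !inE /=.
by apply/negP => /and4P [/eqP sum_pq le_qp q_gt0 _]; lia.
Qed.

Lemma cnum_enum n s : enum_dists n s -> cnum n = size s.
Proof.
move=> [uniq_s mem_s]; rewrite /cnum.
have -> : [set dval i n | i in [set i : nat | 0 < i]]%classic =
          [set` [fset x in map Posz s]%fset]%classic.
  apply/seteqP; split => x /=.
    case=> i i_gt0 <-; rewrite inE /= dvalE //; apply/map_f/mem_s; by exists i.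
  by rewrite inE /= => /mapP [y /mem_s [i i_gt0 ->] ->]; exists i; rewrite ?dvalE.
rewrite set_fsetK card_fseq undup_id ?size_map // map_inj_uniq //.
by move=> x y [].
Qed.

Lemma count_lt_max n s : uniq s -> n \in s -> {in s, forall x, x <= n} ->
  count (fun x => x < n) s = (size s).-1.
Proof.
move=> uniq_s n_in_s le_s; rewrite -(count_predC (fun x => x < n) s).
rewrite (@eq_in_count _ (predC _) (pred1 n)) ?count_uniq_mem ?n_in_s ?addn1 //.
by move=> x /le_s le_xn /=; rewrite -leqNgt eqn_leq le_xn.
Qed.

Unset Implicit Arguments.
Theorem theorem20 (n : nat) (a : seq nat) :
  is_ABR n a ->
  (cnum n = if odd n then size a else (size a).+1) /\
  (hnum n = if odd n then (size a).-1 else size a).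
Proof.
case=> size_a sorted_a gap_a sum_a.
have [m [s [sum_m _ _ enum_s size_s]]] := abr_enum_dists size_a sorted_a gap_a.
have m_eq : m = n by apply/eqP; rewrite -eqz_nat sum_m sum_a.
subst m.
have n_in_s : n \in s.
  apply/enum_s.2; exists n.+1 => //; rewrite dist_pow2_small // expnS leq_mul2l.
  by rewrite ltnW ?orbT // ltn_expl.
have le_s : {in s, forall x, x <= n} by move=> x /enum_s.2 [i _ ->]; apply: dist_pow2_le.
rewrite (cnum_enum enum_s) (hnum_enum enum_s) (count_lt_max enum_s.1 n_in_s le_s).
by rewrite size_s; case: odd.
Qed.
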